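(* Let $K$ be a field, and let $\Phi,\Psi\colon \bigoplus_{1\le b\le d\le 3}\mathbb{I}[b,d]^{m_{b,d}}\to \bigoplus_{1\le b\le d\le 3}\mathbb{I}[b,d]^{m'_{b,d}}$ be morphisms of representations of the quiver $A_3(bf)\colon 1\leftarrow 2\rightarrow 3$ such that $\Phi=R\,\Psi\,C$ for some automorphisms $C$ of the source and $R$ of the target. Then $\Phi^{1:3}_{1:3}=R^{1:3}_{1:3}\,\Psi^{1:3}_{1:3}\,C^{1:3}_{1:3}$ with $R^{1:3}_{1:3}$ and $C^{1:3}_{1:3}$ isomorphisms; in particular $\Phi^{1:3}_{1:3}$ and $\Psi^{1:3}_{1:3}$ are isomorphic as objects of the arrow category of representations. Consequently, for a morphism $\varphi\colon V\to W$ of finite-dimensional representations of $A_3(bf)$, the isomorphism class of the block $(\eta_W\varphi\eta_V^{-1})^{1:3}_{1:3}$ does not depend on the choice of isomorphisms $\eta_V,\eta_W$ of $V,W$ onto direct sums of interval representations.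
   Context: $\mathbb{I}[b,d]$ denotes the interval representation with $K$ at vertices $b,\dots,d$, $0$ elsewhere, identity maps between consecutive copies of $K$ and zero maps otherwise; $\mathbb{I}[b,d]^m$ is the direct sum of $m$ copies. For a morphism $\Phi\colon\bigoplus\mathbb{I}[b,d]^{m_{b,d}}\to\bigoplus\mathbb{I}[b,d]^{m'_{b,d}}$, its block $\Phi^{c:d}_{a:b}$ is $\pi_{c,d}\circ\Phi\circ\iota_{a,b}$ with $\iota_{a,b}$ the canonical summand inclusion into the source and $\pi_{c,d}$ the canonical summand projection of the target. The arrow category of representations has morphisms as objects; a morphism from $f\colon M\to N$ to $f'\colon M'\to N'$ is a pair $(F_M,F_N)$ of morphisms with $F_Nf=f'F_M$; two objects are isomorphic if such a pair of isomorphisms exists. *)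

(* Representations of the quiver A3(bf): 1 <- 2 -> 3,
   concretely: vector spaces K^d1, K^d2, K^d3 and matrices acting on
   column vectors, ra : V2 -> V1, rb : V2 -> V3. *)
From HB Require Import structures.
From mathcomp Require Import all_boot all_order all_algebra.
Set Implicit Arguments. Unset Strict Implicit. Unset Printing Implicit Defensive.
Import GRing.Theory.
Local Open Scope ring_scope.

Record rep (K : fieldType) := Rep {
  d1 : nat; d2 : nat; d3 : nat;
  ra : 'M[K]_(d1, d2);
  rb : 'M[K]_(d3, d2) }.

Record mor (K : fieldType) (V W : rep K) := Mor {
  m1 : 'M[K]_(d1 W, d1 V);
  m2 : 'M[K]_(d2 W, d2 V);
  m3 : 'M[K]_(d3 W, d3 V) }.

Definition is_mor (K : fieldType) (V W : rep K) (f : mor V W) : Prop :=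
  m1 f *m ra V = ra W *m m2 f /\ m3 f *m rb V = rb W *m m2 f.

Definition mcomp (K : fieldType) (U V W : rep K) (g : mor V W) (f : mor U V)
    : mor U W := @Mor K U W (m1 g *m m1 f) (m2 g *m m2 f) (m3 g *m m3 f).

Definition idm (K : fieldType) (V : rep K) : mor V V := @Mor K V V 1%:M 1%:M 1%:M.

Definition zerom (K : fieldType) (V W : rep K) : mor V W := @Mor K V W 0 0 0.

Definition is_iso (K : fieldType) (V W : rep K) (f : mor V W) : Prop :=
  is_mor f /\ exists g : mor W V, is_mor g /\ mcomp g f = idm V /\ mcomp f g = idm W.

Definition arrow_iso (K : fieldType) (M N M' N' : rep K)
  (f : mor M N) (f' : mor M' N') : Prop :=
  is_mor f /\ is_mor f' /\
  exists (FM : mor M M') (FN : mor N N'),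
    is_iso FM /\ is_iso FN /\ mcomp FN f = mcomp f' FM.

(* Interval representation I[b,d]^n : K^n at vertices b..d, 0 elsewhere;
   identity between consecutive copies of K^n, zero otherwise
   (the matrix \matrix_(i,j) (i == j) is the identity when both sides are
   K^n, and an empty matrix when one side is 0). *)
Definition inv (b d i : nat) : bool := (b <= i <= d)%N.
Definition Irep (K : fieldType) (b d n : nat) : rep K :=
  @Rep K (if inv b d 1 then n else 0%N) (if inv b d 2 then n else 0%N)
         (if inv b d 3 then n else 0%N)
         (\matrix_(i, j) ((i : nat) == j)%:R) (\matrix_(i, j) ((i : nat) == j)%:R).

Definition dsum (K : fieldType) (V W : rep K) : rep K :=
  @Rep K (d1 V + d1 W) (d2 V + d2 W) (d3 V + d3 W)
    (block_mx (ra V) 0 0 (ra W)) (block_mx (rb V) 0 0 (rb W)).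

Definition in1 (K : fieldType) (V W : rep K) : mor V (dsum V W) :=
  @Mor K V (dsum V W) (col_mx 1%:M 0) (col_mx 1%:M 0) (col_mx 1%:M 0).
Definition in2 (K : fieldType) (V W : rep K) : mor W (dsum V W) :=
  @Mor K W (dsum V W) (col_mx 0 1%:M) (col_mx 0 1%:M) (col_mx 0 1%:M).
Definition pr1 (K : fieldType) (V W : rep K) : mor (dsum V W) V :=
  @Mor K (dsum V W) V (row_mx 1%:M 0) (row_mx 1%:M 0) (row_mx 1%:M 0).
Definition pr2 (K : fieldType) (V W : rep K) : mor (dsum V W) W :=
  @Mor K (dsum V W) W (row_mx 0 1%:M) (row_mx 0 1%:M) (row_mx 0 1%:M).

Definition Isum (K : fieldType) (m : nat -> nat -> nat) : rep K :=
  dsum (Irep K 1 1 (m 1 1)%N) (dsum (Irep K 1 2 (m 1 2)%N)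
  (dsum (Irep K 1 3 (m 1 3)%N) (dsum (Irep K 2 2 (m 2 2)%N)
  (dsum (Irep K 2 3 (m 2 3)%N) (Irep K 3 3 (m 3 3)%N))))).

(* canonical summand inclusion iota_{b,d} (zero for (b,d) outside the range) *)
Definition iota (K : fieldType) (m : nat -> nat -> nat) (b d : nat)
  : mor (Irep K b d (m b d)) (Isum K m) :=
  match b as b', d as d' return mor (Irep K b' d' (m b' d')) (Isum K m) with
  | 1, 1 => in1 _ _
  | 1, 2 => mcomp (in2 _ _) (in1 _ _)
  | 1, 3 => mcomp (in2 _ _) (mcomp (in2 _ _) (in1 _ _))
  | 2, 2 => mcomp (in2 _ _) (mcomp (in2 _ _) (mcomp (in2 _ _) (in1 _ _)))
  | 2, 3 => mcomp (in2 _ _) (mcomp (in2 _ _) (mcomp (in2 _ _) (mcomp (in2 _ _) (in1 _ _))))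
  | 3, 3 => mcomp (in2 _ _) (mcomp (in2 _ _) (mcomp (in2 _ _) (mcomp (in2 _ _) (in2 _ _))))
  | _, _ => zerom _ _
  end%N.

Definition proj (K : fieldType) (m : nat -> nat -> nat) (b d : nat)
  : mor (Isum K m) (Irep K b d (m b d)) :=
  match b as b', d as d' return mor (Isum K m) (Irep K b' d' (m b' d')) with
  | 1, 1 => pr1 _ _
  | 1, 2 => mcomp (pr1 _ _) (pr2 _ _)
  | 1, 3 => mcomp (pr1 _ _) (mcomp (pr2 _ _) (pr2 _ _))
  | 2, 2 => mcomp (pr1 _ _) (mcomp (pr2 _ _) (mcomp (pr2 _ _) (pr2 _ _)))
  | 2, 3 => mcomp (pr1 _ _) (mcomp (pr2 _ _) (mcomp (pr2 _ _) (mcomp (pr2 _ _) (pr2 _ _))))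
  | 3, 3 => mcomp (pr2 _ _) (mcomp (pr2 _ _) (mcomp (pr2 _ _) (mcomp (pr2 _ _) (pr2 _ _))))
  | _, _ => zerom _ _
  end%N.

(* block Phi^{c:d}_{a:b} = pi_{c,d} o Phi o iota_{a,b} *)
Definition blk (K : fieldType) (m m' : nat -> nat -> nat)
  (Phi : mor (Isum K m) (Isum K m')) (a b c d : nat)
  : mor (Irep K a b (m a b)) (Irep K c d (m' c d)) :=
  mcomp (proj K m' c d) (mcomp Phi (iota K m a b)).

From Pilot Require Import Defs.
From HB Require Import structures.
From mathcomp Require Import all_boot all_order all_algebra.
Set Implicit Arguments. Unset Strict Implicit. Unset Printing Implicit Defensive.
Import GRing.Theory.
Local Open Scope ring_scope.

(* For morphisms A, B between sums of interval representations of
   A3(bf) : 1 <- 2 -> 3, inserting the resolution of the identity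
   1 = sum_(b,d) iota_{b,d} pi_{b,d} between A and B gives the block product
   formula (A B)^{c:d}_{a:b} = sum_(b',d') A^{c:d}_{b':d'} B^{b':d'}_{a:b}.
   For the block 1:3 -> 1:3 only the term (b',d') = (1,3) survives, since
   Hom(I[1,2], I[1,3]) = Hom(I[2,2], I[1,3]) = Hom(I[2,3], I[1,3]) = 0 and
   Hom(I[1,3], I[1,1]) = Hom(I[1,3], I[3,3]) = 0.  Hence taking the 1:3 block
   is multiplicative on morphisms, preserves identities and therefore
   isomorphisms, and Phi = R Psi C yields the factorisation of the blocks and
   the arrow-category isomorphism.  The second part follows from the first
   with R = eta_W eta_W'^{-1} and C = eta_V' eta_V^{-1}. *)

Section IntervalBlocks.
Variable K : fieldType.

(* Vertexwise view of a morphism: vertex v in {1, 2, 3} (other values of v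
   are read as vertex 3); this lets all three vertices be treated at once. *)
Definition dimv (V : rep K) (v : nat) : nat :=
  match v with 1 => d1 V | 2 => d2 V | _ => d3 V end%N.

Definition matv (V W : rep K) (f : mor V W) (v : nat) : 'M[K]_(dimv W v, dimv V v) :=
  match v as v0 return 'M[K]_(dimv W v0, dimv V v0) with
  | 1 => m1 f | 2 => m2 f | _ => m3 f end%N.

Lemma mor_eq (V W : rep K) (f g : mor V W) :
  m1 f = m1 g -> m2 f = m2 g -> m3 f = m3 g -> f = g.
Proof. by case: f g => [? ? ?] [? ? ?] /= -> -> ->. Qed.

Lemma mor_eqv (V W : rep K) (f g : mor V W) :
  (forall v, matv f v = matv g v) -> f = g.
Proof. by move=> fg; apply: mor_eq; [apply: (fg 1%N) | apply: (fg 2%N) | apply: (fg 3%N)]. Qed.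

Lemma matv_comp (U V W : rep K) (g : mor V W) (f : mor U V) v :
  matv (mcomp g f) v = matv g v *m matv f v.
Proof. by case: v => [|[|[|v]]]. Qed.

Lemma matv_zero (V W : rep K) v : matv (zerom V W) v = 0.
Proof. by case: v => [|[|[|v]]]. Qed.

Lemma mcompA (U V W X : rep K) (h : mor W X) (g : mor V W) (f : mor U V) :
  mcomp h (mcomp g f) = mcomp (mcomp h g) f.
Proof. by apply: mor_eq; rewrite /= mulmxA. Qed.

Lemma mcomp1 (V W : rep K) (f : mor V W) : mcomp f (idm V) = f.
Proof. by apply: mor_eq; rewrite /= mulmx1. Qed.

Lemma mcomp1l (V W : rep K) (f : mor V W) : mcomp (idm W) f = f.
Proof. by apply: mor_eq; rewrite /= mul1mx. Qed.

Lemma is_mor_comp (U V W : rep K) (g : mor V W) (f : mor U V) :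
  is_mor g -> is_mor f -> is_mor (mcomp g f).
Proof.
case=> g1 g3 [f1 f3]; split => /=.
  by rewrite -mulmxA f1 !mulmxA g1.
by rewrite -mulmxA f3 !mulmxA g3.
Qed.

Lemma is_mor_zerom (V W : rep K) : is_mor (zerom V W).
Proof. by split; rewrite /= mul0mx mulmx0. Qed.

(* The middle
   factor 1 in dsum_split is kept so that the splitting can be iterated. *)
Lemma is_mor_in1 (V W : rep K) : is_mor (in1 V W).
Proof. by split; rewrite /= mul_col_mx mul_block_col !mul1mx !mul0mx !mulmx1 !mulmx0 !addr0. Qed.

Lemma is_mor_in2 (V W : rep K) : is_mor (in2 V W).
Proof. by split; rewrite /= mul_col_mx mul_block_col !mul1mx !mul0mx !mulmx1 !mulmx0 !add0r. Qed.

Lemma is_mor_pr1 (V W : rep K) : is_mor (pr1 V W).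
Proof. by split; rewrite /= mul_row_block mul_mx_row !mul1mx !mul0mx !mulmx1 !mulmx0 !addr0. Qed.

Lemma is_mor_pr2 (V W : rep K) : is_mor (pr2 V W).
Proof. by split; rewrite /= mul_row_block mul_mx_row !mul1mx !mul0mx !mulmx1 !mulmx0 !add0r. Qed.

Lemma pr1_in1 (V W : rep K) : mcomp (pr1 V W) (in1 V W) = idm V.
Proof. by apply: mor_eq; rewrite /= mul_row_col mul1mx mul0mx addr0. Qed.

Lemma pr2_in2 (V W : rep K) : mcomp (pr2 V W) (in2 V W) = idm W.
Proof. by apply: mor_eq; rewrite /= mul_row_col mul1mx mul0mx add0r. Qed.

Lemma pr2_in2K (U V W : rep K) (f : mor U W) :
  mcomp (pr2 V W) (mcomp (in2 V W) f) = f.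
Proof. by rewrite mcompA pr2_in2 mcomp1l. Qed.

Lemma block_id_split m n : (1%:M : 'M[K]_(m + n)) =
  col_mx 1%:M 0 *m row_mx 1%:M 0 + col_mx 0 1%:M *m 1%:M *m row_mx 0 1%:M.
Proof.
rewrite mulmx1 !mul_col_row !mul1mx !mul0mx add_block_mx !addr0 !add0r.
by rewrite -scalar_mx_block.
Qed.

Lemma dsum_split (V W : rep K) v :
  1%:M = matv (in1 V W) v *m matv (pr1 V W) v
         + matv (in2 V W) v *m 1%:M *m matv (pr2 V W) v.
Proof. by case: v => [|[|[|v]]]; exact: block_id_split. Qed.

Ltac is_mor_chain :=
  repeat first [ apply: is_mor_comp | apply: is_mor_in1 | apply: is_mor_in2
               | apply: is_mor_pr1 | apply: is_mor_pr2 | apply: is_mor_zerom ].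

Lemma is_mor_iota (m : nat -> nat -> nat) b d : is_mor (Defs.iota K m b d).
Proof. by move: b d => [|[|[|[|b]]]] [|[|[|[|d]]]]; rewrite /Defs.iota; is_mor_chain. Qed.

Lemma is_mor_proj (m : nat -> nat -> nat) b d : is_mor (proj K m b d).
Proof. by move: b d => [|[|[|[|b]]]] [|[|[|[|d]]]]; rewrite /proj; is_mor_chain. Qed.

Definition summands : seq (nat * nat) :=
  [:: (1, 1); (1, 2); (1, 3); (2, 2); (2, 3); (3, 3)]%N.

Lemma proj_iota (m : nat -> nat -> nat) b d : (b, d) \in summands ->
  mcomp (proj K m b d) (Defs.iota K m b d) = idm _.
Proof.
rewrite !inE => /orP[|/orP[|/orP[|/orP[|/orP[]]]]] /eqP[-> ->];
  by rewrite /proj /Defs.iota -?mcompA ?pr2_in2K ?pr1_in1 ?pr2_in2.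
Qed.

Lemma sum_iota_proj (m : nat -> nat -> nat) v :
  1%:M = matv (Defs.iota K m 1 1) v *m matv (proj K m 1 1) v
       + matv (Defs.iota K m 1 2) v *m matv (proj K m 1 2) v
       + matv (Defs.iota K m 1 3) v *m matv (proj K m 1 3) v
       + matv (Defs.iota K m 2 2) v *m matv (proj K m 2 2) v
       + matv (Defs.iota K m 2 3) v *m matv (proj K m 2 3) v
       + matv (Defs.iota K m 3 3) v *m matv (proj K m 3 3) v.
Proof.
rewrite /Defs.iota /proj /Isum !matv_comp.
(* abstracting the summands keeps the matrix dimensions opaque *)
move: (Irep K 1 1 _) (Irep K 1 2 _) (Irep K 1 3 _) (Irep K 2 2 _) (Irep K 2 3 _) (Irep K 3 3 _).
move=> V1 V2 V3 V4 V5 V6.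
do 5 rewrite dsum_split.
by rewrite mulmx1 !(mulmxDr, mulmxDl) !mulmxA !addrA.
Qed.

Lemma is_mor_blk (m m' : nat -> nat -> nat) (A : mor (Isum K m) (Isum K m')) :
  is_mor A -> forall a b c d, is_mor (blk A a b c d).
Proof.
move=> hA a b c d.
exact: is_mor_comp (is_mor_proj _ _ _) (is_mor_comp hA (is_mor_iota _ _ _)).
Qed.

Lemma blk_idm (m : nat -> nat -> nat) b d : (b, d) \in summands ->
  blk (idm (Isum K m)) b d b d = idm _.
Proof. by move=> bd; rewrite /blk mcomp1l proj_iota. Qed.

Lemma matv_blk (m m' : nat -> nat -> nat) (A : mor (Isum K m) (Isum K m')) a b c d v :
  matv (blk A a b c d) v =
  matv (proj K m' c d) v *m (matv A v *m matv (Defs.iota K m a b) v).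
Proof. by rewrite /blk !matv_comp. Qed.

Lemma insert_resolution (p q r s t n1 n2 n3 n4 n5 n6 : nat)
    (P : 'M[K]_(p, q)) (A : 'M_(q, r)) (B : 'M_(r, s)) (I : 'M_(s, t))
    (i1 : 'M_(r, n1)) (i2 : 'M_(r, n2)) (i3 : 'M_(r, n3))
    (i4 : 'M_(r, n4)) (i5 : 'M_(r, n5)) (i6 : 'M_(r, n6))
    (p1 : 'M_(n1, r)) (p2 : 'M_(n2, r)) (p3 : 'M_(n3, r))
    (p4 : 'M_(n4, r)) (p5 : 'M_(n5, r)) (p6 : 'M_(n6, r)) :
  1%:M = i1 *m p1 + i2 *m p2 + i3 *m p3 + i4 *m p4 + i5 *m p5 + i6 *m p6 ->
  P *m (A *m B *m I) =
      P *m (A *m i1) *m (p1 *m (B *m I)) + P *m (A *m i2) *m (p2 *m (B *m I))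
    + P *m (A *m i3) *m (p3 *m (B *m I)) + P *m (A *m i4) *m (p4 *m (B *m I))
    + P *m (A *m i5) *m (p5 *m (B *m I)) + P *m (A *m i6) *m (p6 *m (B *m I)).
Proof.
by move=> id_split; rewrite -{1}[A]mulmx1 id_split !(mulmxDr, mulmxDl) !mulmxA.
Qed.

Lemma blk_comp (m m' m'' : nat -> nat -> nat)
    (A : mor (Isum K m') (Isum K m'')) (B : mor (Isum K m) (Isum K m')) a b c d v :
  matv (blk (mcomp A B) a b c d) v =
      matv (blk A 1 1 c d) v *m matv (blk B a b 1 1) v
    + matv (blk A 1 2 c d) v *m matv (blk B a b 1 2) v
    + matv (blk A 1 3 c d) v *m matv (blk B a b 1 3) v
    + matv (blk A 2 2 c d) v *m matv (blk B a b 2 2) v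
    + matv (blk A 2 3 c d) v *m matv (blk B a b 2 3) v
    + matv (blk A 3 3 c d) v *m matv (blk B a b 3 3) v.
Proof.
rewrite !matv_blk [matv (mcomp A B) v]matv_comp.
exact: insert_resolution (sum_iota_proj m' v).
Qed.

Lemma Irep_map_id n : (\matrix_(i < n, j < n) ((i : nat) == j)%:R : 'M[K]_n) = 1%:M.
Proof. by apply/matrixP => i j; rewrite !mxE. Qed.

(* The five vanishing Hom spaces between interval representations that kill
   all but one term of the block product formula for the block 1:3 -> 1:3. *)
Lemma hom12_13 a b (f : mor (Irep K 1 2 a) (Irep K 1 3 b)) : is_mor f -> f = zerom _ _.
Proof.
case; rewrite /= !Irep_map_id mul1mx mulmx1 => f1_f2 f3_f2.
have f2_0 : m2 f = 0 by rewrite -f3_f2 flatmx0 mulmx0.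
by apply: mor_eq; [rewrite f1_f2 | | apply: thinmx0].
Qed.

Lemma hom22_13 a b (f : mor (Irep K 2 2 a) (Irep K 1 3 b)) : is_mor f -> f = zerom _ _.
Proof.
case; rewrite /= !Irep_map_id !mul1mx => f1_f2 _.
have f2_0 : m2 f = 0 by rewrite -f1_f2 flatmx0 mulmx0.
by apply: mor_eq; [apply: thinmx0 | | apply: thinmx0].
Qed.

Lemma hom23_13 a b (f : mor (Irep K 2 3 a) (Irep K 1 3 b)) : is_mor f -> f = zerom _ _.
Proof.
case; rewrite /= !Irep_map_id !mul1mx => f1_f2 f3_f2.
have f2_0 : m2 f = 0 by rewrite -f1_f2 flatmx0 mulmx0.
by apply: mor_eq; [apply: thinmx0 | | rewrite -[m3 f]mulmx1 f3_f2 f2_0].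
Qed.

Lemma hom13_11 a b (f : mor (Irep K 1 3 a) (Irep K 1 1 b)) : is_mor f -> f = zerom _ _.
Proof.
case; rewrite /= !Irep_map_id !mulmx1 => f1_f2 _.
by apply: mor_eq; [rewrite f1_f2 flatmx0 mulmx0 | apply: flatmx0 | apply: flatmx0].
Qed.

Lemma hom13_33 a b (f : mor (Irep K 1 3 a) (Irep K 3 3 b)) : is_mor f -> f = zerom _ _.
Proof.
case; rewrite /= !Irep_map_id !mulmx1 => _ f3_f2.
by apply: mor_eq; [apply: flatmx0 | apply: flatmx0 | rewrite f3_f2 flatmx0 mulmx0].
Qed.

Lemma blk13_comp (m m' m'' : nat -> nat -> nat)
    (A : mor (Isum K m') (Isum K m'')) (B : mor (Isum K m) (Isum K m')) :
  is_mor A -> is_mor B ->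
  blk (mcomp A B) 1 3 1 3 = mcomp (blk A 1 3 1 3) (blk B 1 3 1 3).
Proof.
move=> hA hB; apply: mor_eqv => v.
rewrite matv_comp blk_comp.
rewrite (hom12_13 (is_mor_blk hA 1 2 1 3)) (hom22_13 (is_mor_blk hA 2 2 1 3)).
rewrite (hom23_13 (is_mor_blk hA 2 3 1 3)) (hom13_11 (is_mor_blk hB 1 3 1 1)).
rewrite (hom13_33 (is_mor_blk hB 1 3 3 3)) !matv_zero.
by rewrite !mul0mx !mulmx0 !add0r !addr0.
Qed.

Lemma iso_of_inverse (V W : rep K) (f : mor V W) (g : mor W V) :
  is_mor f -> is_mor g -> mcomp g f = idm V -> mcomp f g = idm W -> is_iso f.
Proof. by move=> hf hg gf fg; split=> //; exists g. Qed.

Lemma is_iso_comp (U V W : rep K) (g : mor V W) (f : mor U V) :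
  is_iso g -> is_iso f -> is_iso (mcomp g f).
Proof.
move=> [hg [gi [hgi [gig ggi]]]] [hf [fi [hfi [fif ffi]]]].
apply: (iso_of_inverse (g := mcomp fi gi)); try exact: is_mor_comp.
  by rewrite mcompA -(mcompA fi) gig mcomp1 fif.
by rewrite mcompA -(mcompA g) ffi mcomp1 ggi.
Qed.

(* If f = r g c with r and c isomorphisms, then f and g are isomorphic in the
   arrow category (via c on sources and r^{-1} on targets). *)
Lemma arrow_iso_of_factorization (M N M' N' : rep K) (f : mor M N) (g : mor M' N')
    (r : mor N' N) (c : mor M M') :
  is_mor f -> is_mor g -> is_iso r -> is_iso c -> f = mcomp r (mcomp g c) ->
  arrow_iso f g.
Proof.
move=> hf hg [hr [ri [hri [rir rri]]]] hc f_eq.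
split=> //; split=> //; exists c, ri; split=> //; split.
  exact: iso_of_inverse rri rir.
by rewrite f_eq mcompA rir mcomp1l.
Qed.

Lemma blk13_iso (m m' : nat -> nat -> nat) (A : mor (Isum K m) (Isum K m')) :
  is_iso A -> is_iso (blk A 1 3 1 3).
Proof.
move=> [hA [Ai [hAi [AiA AAi]]]].
apply: (iso_of_inverse (g := blk Ai 1 3 1 3)); try exact: is_mor_blk.
  by rewrite -blk13_comp // AiA blk_idm.
by rewrite -blk13_comp // AAi blk_idm.
Qed.

Lemma blk13_factor (ma mb ma' mb' : nat -> nat -> nat)
    (Phi : mor (Isum K ma') (Isum K mb')) (Psi : mor (Isum K ma) (Isum K mb))
    (R : mor (Isum K mb) (Isum K mb')) (C : mor (Isum K ma') (Isum K ma)) :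
  is_mor Phi -> is_mor Psi -> is_iso R -> is_iso C ->
  Phi = mcomp R (mcomp Psi C) ->
  [/\ blk Phi 1 3 1 3 = mcomp (blk R 1 3 1 3) (mcomp (blk Psi 1 3 1 3) (blk C 1 3 1 3)),
      is_iso (blk R 1 3 1 3), is_iso (blk C 1 3 1 3) &
      arrow_iso (blk Phi 1 3 1 3) (blk Psi 1 3 1 3)].
Proof.
move=> hPhi hPsi hR hC Phi_eq.
have blk_eq : blk Phi 1 3 1 3 =
    mcomp (blk R 1 3 1 3) (mcomp (blk Psi 1 3 1 3) (blk C 1 3 1 3)).
  rewrite Phi_eq (blk13_comp hR.1 (is_mor_comp hPsi hC.1)).
  by rewrite (blk13_comp hPsi hC.1).
split; [exact: blk_eq | exact: blk13_iso | exact: blk13_iso |].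
exact: arrow_iso_of_factorization (is_mor_blk hPhi 1 3 1 3) (is_mor_blk hPsi 1 3 1 3)
  (blk13_iso hR) (blk13_iso hC) blk_eq.
Qed.

End IntervalBlocks.

Theorem mainTheorem4 (K : fieldType) :
  (forall (m m' : nat -> nat -> nat)
          (Phi Psi : mor (Isum K m) (Isum K m'))
          (R : mor (Isum K m') (Isum K m')) (C : mor (Isum K m) (Isum K m)),
     is_mor Phi -> is_mor Psi -> is_iso R -> is_iso C ->
     Phi = mcomp R (mcomp Psi C) ->
     [/\ blk Phi 1 3 1 3 = mcomp (blk R 1 3 1 3) (mcomp (blk Psi 1 3 1 3) (blk C 1 3 1 3)),
         is_iso (blk R 1 3 1 3),
         is_iso (blk C 1 3 1 3) &
         arrow_iso (blk Phi 1 3 1 3) (blk Psi 1 3 1 3)]) /\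
  (forall (V W : rep K) (phi : mor V W), is_mor phi ->
   forall (mV mW nV nW : nat -> nat -> nat)
          (etaV : mor V (Isum K mV)) (etaVi : mor (Isum K mV) V)
          (etaW : mor W (Isum K mW))
          (etaV' : mor V (Isum K nV)) (etaVi' : mor (Isum K nV) V)
          (etaW' : mor W (Isum K nW)),
     is_iso etaV -> is_mor etaVi ->
     mcomp etaVi etaV = idm V -> mcomp etaV etaVi = idm (Isum K mV) ->
     is_iso etaW ->
     is_iso etaV' -> is_mor etaVi' ->
     mcomp etaVi' etaV' = idm V -> mcomp etaV' etaVi' = idm (Isum K nV) ->
     is_iso etaW' ->
     arrow_iso (blk (mcomp etaW (mcomp phi etaVi)) 1 3 1 3)
               (blk (mcomp etaW' (mcomp phi etaVi')) 1 3 1 3)).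
Proof.
split=> [m m' Phi Psi R C|]; first exact: blk13_factor.
move=> V W phi hphi mV mW nV nW etaV etaVi etaW etaV' etaVi' etaW'
  hV hVi eV1 eV2 hW hV' hVi' eV1' _ hW'.
have [hW'm [Wi' [hWi' [eW1' eW2']]]] := hW'.
(* R = eta_W eta_W'^{-1} and C = eta_V' eta_V^{-1} compare the two choices *)
have hR : is_iso (mcomp etaW Wi') := is_iso_comp hW (iso_of_inverse hWi' hW'm eW2' eW1').
have hC : is_iso (mcomp etaV' etaVi) := is_iso_comp hV' (iso_of_inverse hVi hV.1 eV2 eV1).
have phi_eq : mcomp etaW (mcomp phi etaVi) =
    mcomp (mcomp etaW Wi') (mcomp (mcomp etaW' (mcomp phi etaVi')) (mcomp etaV' etaVi)).
  rewrite !mcompA -(mcompA etaW Wi') eW1' mcomp1.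
  by rewrite -!mcompA (mcompA etaVi') eV1' mcomp1l.
have hmor (X Y : rep K) (eX : mor W X) (iY : mor Y V) :
    is_mor eX -> is_mor iY -> is_mor (mcomp eX (mcomp phi iY)).
  by move=> hX hY; apply: is_mor_comp (is_mor_comp hphi hY).
by case: (blk13_factor (hmor _ _ _ _ hW.1 hVi) (hmor _ _ _ _ hW'm hVi') hR hC phi_eq).
Qed.
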